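(* Let $d\ge 2$, $\xi>0$, and let $\sigma:\xi\mathbb{Z}^d\to\mathbb{R}$ be a generalized mass configuration. Let $R>0$ be such that $\operatorname{supp}\sigma\subset \hat B_R:=B(0,R)\cap\xi\mathbb{Z}^d$, and let $x_1,x_2,x_3,\ldots$ be an infinitely covering sequence of $\hat B_R$. For each $k\ge1$ let $\sigma_k:=T_{x_k}T_{x_{k-1}}\cdots T_{x_1}\sigma$ be the configuration obtained from $\sigma$ after toppling the points $x_1,\ldots,x_k$ in this order, and let $u_k$ be the corresponding $k$th odometer function. Then there exist a generalized mass configuration $\nu$ on $\xi\mathbb{Z}^d$ and a function $u:\xi\mathbb{Z}^d\to\mathbb{R}_+$ such that $\sigma_k(x)\to\nu(x)$ and $u_k(x)\nearrow u(x)$ for every $x\in\xi\mathbb{Z}^d$ as $k\to\infty$. Moreover, writing $\nu=\nu_+-\nu_-$ with $\nu_+=\max(\nu,0)$, $\nu_-=-\min(\nu,0)$, we have $\operatorname{supp}\nu_+\subset\partial\hat B_R$ and $\operatorname{supp}\nu_-\subset\operatorname{supp}\sigma_-$, so that $\nu\ge0$ on $\partial\hat B_R$ and $\nu\le 0$ on $\hat B_R$.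
   Context: A generalized mass configuration on $\xi\mathbb{Z}^d$ is a bounded function $\sigma:\xi\mathbb{Z}^d\to\mathbb{R}$ with finite support; $\sigma_+=\max(\sigma,0)$, $\sigma_-=-\min(\sigma,0)$, and $\operatorname{supp}\sigma=\operatorname{supp}\sigma_+\cup\operatorname{supp}\sigma_-$. For $y,y'\in\xi\mathbb{Z}^d$, $y'\sim y$ means $y'$ is one of the $2d$ lattice neighbours of $y$ at distance $\xi$. The discrete Laplacian is $\Delta f(y)=\frac{1}{2d\xi^2}\sum_{y'\sim y}(f(y')-f(y))$. For $x\in\xi\mathbb{Z}^d$ and a configuration $\eta$, the toppling of $\eta$ at $x$ is $T_x\eta(y):=\eta(y)+\eta_+(x)\,\xi^2\,\Delta\delta_x(y)$, where $\delta_x$ is the discrete delta function at $x$; i.e. if $\eta(x)>0$ the mass $\eta(x)$ is removed from $x$ and $\eta(x)/(2d)$ is added to each neighbour of $x$, and otherwise nothing changes. An infinitely covering sequence of a set $S\subset\xi\mathbb{Z}^d$ is a sequence of points of $S$ in which every point of $S$ appears infinitely often. The $k$th odometer function is $u_k(x):=\xi^2\sum_{1\le j\le k,\ x_j=x}(\sigma_{j-1})_+(x)$ (with $\sigma_0=\sigma$), i.e. $\xi^2$ times the total mass emitted from $x$ during the first $k$ topplings. For $S\subset\xi\mathbb{Z}^d$, the outer boundary is $\partial S:=\{y\notin S:\exists\, y'\in S \text{ with } y\sim y'\}$. $B(a,r)$ denotes the open Euclidean ball in $\mathbb{R}^d$. *)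

From HB Require Import structures.
From mathcomp Require Import all_boot all_order all_algebra.
From mathcomp Require Import all_classical all_reals all_analysis.
Set Implicit Arguments. Unset Strict Implicit. Unset Printing Implicit Defensive.
Import Order.TTheory GRing.Theory Num.Theory.
Local Open Scope ring_scope.

(* A point of xi Z^d is represented by its integer coordinates z : 'I_d -> int;
   the actual point is xi * z. *)
Definition pt (d : nat) := {ffun 'I_d -> int}.

Definition shift d (y : pt d) (i : 'I_d) (s : int) : pt d :=
  [ffun j => y j + (if j == i then s else 0)].

Definition adj d (y' y : pt d) : Prop :=
  exists i : 'I_d, y' = shift y i 1 \/ y' = shift y i (-1).

Section Defs.
Variable R : realType.

Definition posp (a : R) : R := Num.max a 0.
Definition negp (a : R) : R := - Num.min a 0.

Definition gen_mass_config d (s : pt d -> R) : Prop :=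
  (exists M : R, forall y, `|s y| <= M) /\
  (exists S : seq (pt d), forall y, y \notin S -> s y = 0).

Definition ddelta d (x : pt d) : pt d -> R := fun y => if y == x then 1 else 0.

Definition dlap d (xi : R) (f : pt d -> R) (y : pt d) : R :=
  (2 * d%:R * xi ^+ 2)^-1 *
  \sum_(i < d) ((f (shift y i 1) - f y) + (f (shift y i (-1)) - f y)).

Definition topple d (xi : R) (x : pt d) (eta : pt d -> R) : pt d -> R :=
  fun y => eta y + posp (eta x) * xi ^+ 2 * dlap xi (ddelta x) y.

(* sigma_k = T_{x_k} ... T_{x_1} sigma  (sequence indexed from 1) *)
Fixpoint topseq d (xi : R) (x : nat -> pt d) (sigma : pt d -> R) (k : nat)
  : pt d -> R :=
  match k with
  | 0 => sigma
  | k'.+1 => topple xi (x k'.+1) (topseq xi x sigma k')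
  end.

Definition odometer d (xi : R) (x : nat -> pt d) (sigma : pt d -> R) (k : nat)
  (y : pt d) : R :=
  xi ^+ 2 * \sum_(1 <= j < k.+1 | x j == y) posp (topseq xi x sigma j.-1 y).

Definition in_ball d (xi rad : R) (y : pt d) : Prop :=
  Num.sqrt (\sum_(i < d) (xi * (y i)%:~R) ^+ 2) < rad.

Definition outer_boundary d (S : pt d -> Prop) (y : pt d) : Prop :=
  ~ S y /\ exists y', S y' /\ adj y y'.

(* infinitely covering sequence (indexed from 1) of S *)
Definition inf_covering d (S : pt d -> Prop) (x : nat -> pt d) : Prop :=
  (forall k, (1 <= k)%N -> S (x k)) /\
  (forall y, S y -> forall N : nat, exists k, (N <= k)%N /\ (1 <= k)%N /\ x k = y).

End Defs.

From Pilot Require Import Defs.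
From HB Require Import structures.
From mathcomp Require Import all_boot all_order all_algebra.
From mathcomp Require Import all_classical all_reals all_analysis.
From mathcomp Require Import zify ring lra.
Import Order.TTheory GRing.Theory Num.Theory.
Import numFieldNormedType.Exports.
Local Open Scope classical_set_scope.
Local Open Scope ring_scope.

Local Notation shift := Pilot.Defs.shift.

(* The odometers are nondecreasing, so everything hinges on a uniform bound on the total
   mass emitted by the topplings.  All topplings happen in the ball, so they only move mass
   inside a fixed finite box S.  There a toppling at x conserves the total mass, does not
   increase the total positive mass, and raises the second moment sum_S |y|^2 eta(y) by
   exactly the emitted mass, because the second differences of |y|^2 are constant.  Since
   the second moment is at most (sum_S |y|^2) times the positive mass, the emitted mass is
   bounded.  Hence u_k converges to some u, and sigma_k = sigma + Delta u_k converges to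
   nu = sigma + Delta u.  A point of the ball is toppled infinitely often, each time ending
   nonpositive, so nu <= 0 there; nonnegative sites stay nonnegative; and sites neither in
   the ball nor adjacent to it never receive mass. *)

Section Lattice.
Context {d : nat}.
Implicit Types (x y : pt d) (i : 'I_d) (s : int).

Lemma shiftK y i s : shift (shift y i s) i (-s) = y.
Proof.
apply/ffunP => j; rewrite !ffunE; case: eqP => _; last by rewrite !addr0.
by rewrite -addrA subrr addr0.
Qed.

Lemma shift_eq y x i s : (shift y i s == x) = (y == shift x i (-s)).
Proof.
apply/eqP/eqP => [<-|->]; first by rewrite shiftK.
by rewrite -{2}(opprK s) shiftK.
Qed.

Lemma shift_neq y i s : s != 0 -> shift y i s != y.
Proof.
move=> s0; apply/eqP => /ffunP /(_ i); rewrite ffunE eqxx => /eqP.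
by rewrite -subr_eq0 addrC addKr (negbTE s0).
Qed.

Definition in_box (M : nat) y := forall j, (`|y j| <= M)%N.

Definition box (M : nat) : seq (pt d) :=
  [seq [ffun j => (g j)%:Z - M%:Z] | g : {ffun 'I_d -> 'I_(M + M).+1}].

Lemma mem_box M y : in_box M y -> y \in box M.
Proof.
move=> yM; apply/mapP; exists [ffun j => inord `|y j + M%:Z|]; first by rewrite mem_enum.
apply/ffunP => j; rewrite !ffunE inordK; have := yM j; move: (y j) => z; lia.
Qed.

Lemma in_box_shift M y i s : in_box M y -> (`|s| <= 1)%N -> in_box M.+1 (shift y i s).
Proof. by move=> yM s1 j; rewrite ffunE; have := yM j; case: (j == i) => /=; lia. Qed.

End Lattice.

Lemma in_ball_box {R : realType} {d : nat} {xi rad : R} {y : pt d} : 0 < xi ->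
  in_ball xi rad y -> in_box (Num.Def.archi_bound (rad / xi)) y.
Proof.
move=> xi_gt0 yB j.
have rad_gt0 : 0 < rad by apply: le_lt_trans yB; exact: sqrtr_ge0.
have coord_le : (xi * (y j)%:~R) ^+ 2 <= \sum_(i < d) (xi * (y i)%:~R) ^+ 2.
  by rewrite (bigD1 j) //= lerDl sumr_ge0 // => i _; exact: sqr_ge0.
have : `|xi * (y j)%:~R| < rad.
  by rewrite -sqrtr_sqr; apply: le_lt_trans yB; exact: ler_wsqrtr.
rewrite normrM gtr0_norm // -ltr_pdivlMl // mulrC -intr_norm -natr_absz => lt_yj.
apply: ltnW; rewrite -(ltr_nat R).
exact: lt_trans lt_yj (archi_boundP (ltW (divr_gt0 rad_gt0 xi_gt0))).
Qed.

Section PositivePart.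
Context {R : realType}.
Implicit Types a b : R.

Lemma posp_ge0 a : 0 <= posp a.
Proof. by rewrite /posp le_max lexx orbT. Qed.

Lemma ler_posp a : a <= posp a.
Proof. by rewrite /posp le_max lexx. Qed.

Lemma ger0_posp a : 0 <= a -> posp a = a.
Proof. by move=> a_ge0; rewrite /posp max_l. Qed.

Lemma ler0_posp a : a <= 0 -> posp a = 0.
Proof. by move=> a_le0; rewrite /posp max_r. Qed.

Lemma posp_le a b : a <= b -> 0 <= b -> posp a <= b.
Proof. by move=> ab b_ge0; rewrite /posp ge_max ab b_ge0. Qed.

Lemma posp_eq0 a : (posp a == 0) = (a <= 0).
Proof.
case: (lerP a 0) => [a_le0 | a_gt0]; first by rewrite ler0_posp // eqxx.
by rewrite ger0_posp ?(ltW a_gt0) // (gt_eqF a_gt0).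
Qed.

Lemma negp_eq0 a : (negp a == 0) = (0 <= a).
Proof.
case: (lerP 0 a) => [a_ge0 | a_lt0]; rewrite /negp oppr_eq0.
  by rewrite min_r // eqxx.
by rewrite min_l ?(ltW a_lt0) // (lt_eqF a_lt0).
Qed.

Lemma subr_posp_le0 a : a - posp a <= 0.
Proof. by rewrite subr_le0 ler_posp. Qed.

Lemma le_sum_mem {I : eqType} (S : seq I) (h : I -> R) i :
  (forall j, 0 <= h j) -> i \in S -> h i <= \sum_(j <- S) h j.
Proof.
move=> h_ge0; elim: S => [//|j S IH]; rewrite in_cons big_cons => /orP [/eqP ->|iS].
  by rewrite lerDl sumr_ge0.
by apply: le_trans (IH iS) _; rewrite lerDr.
Qed.

Lemma sum_mul_le_posp {I : eqType} (S : seq I) (h g : I -> R) : (forall i, 0 <= h i) ->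
  \sum_(i <- S) h i * g i <= (\sum_(i <- S) h i) * \sum_(i <- S) posp (g i).
Proof.
move=> h_ge0; rewrite mulr_sumr big_seq [leRHS]big_seq.
apply: ler_sum => i iS; apply: (@le_trans _ _ (h i * posp (g i))).
  by rewrite ler_wpM2l // ler_posp.
by rewrite ler_wpM2r ?posp_ge0 // le_sum_mem.
Qed.

End PositivePart.

Section Toppling.
Context {R : realType} {d : nat}.
Variable xi : R.
Implicit Types (x y z : pt d) (f g eta : pt d -> R).

Definition neighbours_in (S : seq (pt d)) x :=
  [/\ x \in S, forall i, shift x i 1 \in S & forall i, shift x i (-1) \in S].

Lemma adj_sym x y : adj x y -> adj y x.
Proof.
case=> i [->|->]; exists i; [right | left]; first by rewrite shiftK.
by rewrite -{1}(opprK 1) shiftK.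
Qed.

Lemma dlap0 y : dlap xi (fun _ => 0) y = 0.
Proof. by rewrite /dlap big1 ?mulr0 // => i _; rewrite !subrr addr0. Qed.

Lemma dlap_linear f g (c : R) y :
  dlap xi (fun z => f z + c * g z) y = dlap xi f y + c * dlap xi g y.
Proof.
rewrite /dlap [c * (_ * _)]mulrCA -mulrDr; congr (_ * _).
by rewrite mulr_sumr -big_split; apply: eq_bigr => i _ /=; ring.
Qed.

Lemma cvg_dlap (F : nat -> pt d -> R) f y : (forall z, F k z @[k --> \oo] --> f z) ->
  dlap xi (F k) y @[k --> \oo] --> dlap xi f y.
Proof.
move=> F_cvg; apply: cvgMl_tmp; apply: cvg_big => [|i _]; first exact: add_continuous.
by apply: cvgD; apply: cvgB.
Qed.

Lemma dlap_ddelta_ge0 x y : y != x -> 0 <= dlap xi (ddelta R x) y.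
Proof.
move=> yx; apply: mulr_ge0; first by rewrite invr_ge0 mulr_ge0 ?sqr_ge0 // mulr_ge0.
by apply: sumr_ge0 => i _; rewrite /ddelta (negbTE yx) !subr0; apply: addr_ge0; case: ifP.
Qed.

Lemma dlap_ddelta_far x y : y != x -> ~ adj x y -> dlap xi (ddelta R x) y = 0.
Proof.
move=> yx xy; rewrite /dlap big1 ?mulr0 // => i _; rewrite /ddelta (negbTE yx).
case: eqP => [x_nbr | _]; first by case: xy; exists i; left.
by case: eqP => [x_nbr | _]; [case: xy; exists i; right | rewrite !subrr addr0].
Qed.

Definition sqnorm y : R := \sum_(j < d) (y j)%:~R ^+ 2.

Lemma sqnorm_ge0 y : 0 <= sqnorm y.
Proof. by apply: sumr_ge0 => j _; exact: sqr_ge0. Qed.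

Lemma sqnorm_second_difference x i :
  sqnorm (shift x i (-1)) + sqnorm (shift x i 1) - 2 * sqnorm x = 2.
Proof.
rewrite /sqnorm mulr_sumr -big_split -sumrB /=.
rewrite (eq_bigr (fun j => if j == i then 2 else 0)) => [|j _].
  by rewrite -big_mkcond big_pred1_eq.
by rewrite !ffunE; case: (j == i); rewrite /= ?addr0 ?intrD ?intrN /=; ring.
Qed.

Lemma topple_ge x eta y : y != x -> eta y <= topple xi x eta y.
Proof.
move=> yx; rewrite /topple lerDl mulr_ge0 ?dlap_ddelta_ge0 //.
by rewrite mulr_ge0 ?posp_ge0 ?sqr_ge0.
Qed.

Lemma topple_far x eta y : y != x -> ~ adj x y -> topple xi x eta y = eta y.
Proof. by move=> yx xy; rewrite /topple dlap_ddelta_far // mulr0 addr0. Qed.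

Hypotheses (xi_neq0 : xi != 0) (d_gt0 : (0 < d)%N).

Lemma dlap_ddelta_id x : dlap xi (ddelta R x) x = - (xi ^+ 2)^-1.
Proof.
have d_neq0 : (d%:R : R) != 0 by rewrite pnatr_eq0 -lt0n.
rewrite /dlap (eq_bigr (fun _ => -2)) => [|i _].
  by rewrite sumr_const card_ord -mulNrn -mulr_natr; field; rewrite d_neq0 xi_neq0.
have shift_neq_pm (s : int) : s != 0 -> (shift x i s == x) = false.
  by move=> s0; apply: negbTE; apply: shift_neq.
by rewrite /ddelta eqxx !shift_neq_pm // sub0r -opprD.
Qed.

Lemma sum_mul_dlap_ddelta (S : seq (pt d)) x g : uniq S -> neighbours_in S x ->
  \sum_(y <- S) g y * (xi ^+ 2 * dlap xi (ddelta R x) y) =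
  (2 * d%:R)^-1 * \sum_(i < d) (g (shift x i (-1)) + g (shift x i 1) - 2 * g x).
Proof.
move=> uS [xS xS1 xS2].
have d_neq0 : (d%:R : R) != 0 by rewrite pnatr_eq0 -lt0n.
have sum_ddelta a : a \in S -> \sum_(y <- S) g y * ddelta R a y = g a.
  move=> aS; rewrite (bigD1_seq a) //= /ddelta eqxx mulr1 big1 ?addr0 //.
  by move=> y /negbTE ->; rewrite mulr0.
have scale t : xi ^+ 2 * ((2 * d%:R * xi ^+ 2)^-1 * t) = (2 * d%:R)^-1 * t.
  by field; rewrite d_neq0 xi_neq0.
transitivity ((2 * d%:R)^-1 * \sum_(y <- S) \sum_(i < d)
    (g y * ddelta R (shift x i (-1)) y + g y * ddelta R (shift x i 1) y -
     2 * (g y * ddelta R x y))).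
  rewrite mulr_sumr; apply: eq_bigr => y _; rewrite /dlap scale mulrCA mulr_sumr.
  congr (_ * _); apply: eq_bigr => i _; rewrite /ddelta !shift_eq opprK.
  by case: (y == _); case: (y == _); case: (y == _); ring.
congr (_ * _); rewrite exchange_big; apply: eq_bigr => i _.
by rewrite sumrB big_split -mulr_sumr !sum_ddelta.
Qed.

Lemma sum_dlap_ddelta (S : seq (pt d)) x : uniq S -> neighbours_in S x ->
  \sum_(y <- S) xi ^+ 2 * dlap xi (ddelta R x) y = 0.
Proof.
move=> uS Sx; under eq_bigr do rewrite -[xi ^+ 2 * _]mul1r.
by rewrite (sum_mul_dlap_ddelta S x (fun=> 1)) // big1 ?mulr0 // => i _; ring.
Qed.

Lemma sum_sqnorm_dlap_ddelta (S : seq (pt d)) x : uniq S -> neighbours_in S x ->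
  \sum_(y <- S) sqnorm y * (xi ^+ 2 * dlap xi (ddelta R x) y) = 1.
Proof.
move=> uS Sx; rewrite sum_mul_dlap_ddelta //.
under eq_bigr do rewrite sqnorm_second_difference.
have d_neq0 : (d%:R : R) != 0 by rewrite pnatr_eq0 -lt0n.
by rewrite sumr_const card_ord -mulr_natr; field.
Qed.

Lemma topple_id x eta : topple xi x eta x = eta x - posp (eta x).
Proof. by rewrite /topple dlap_ddelta_id //; field. Qed.

Lemma topple_le0 x eta : topple xi x eta x <= 0.
Proof. by rewrite topple_id subr_posp_le0. Qed.

Lemma topple_ge0 x eta y : 0 <= eta y -> 0 <= topple xi x eta y.
Proof.
have [->|yx] := eqVneq y x => eta_ge0; last exact: le_trans eta_ge0 (topple_ge _ _ _ yx).
by rewrite topple_id ger0_posp // subrr.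
Qed.

Lemma posp_topple x eta y :
  posp (topple xi x eta y) <= posp (eta y) + (topple xi x eta y - eta y).
Proof.
have [->|yx] := eqVneq y x.
  rewrite ler0_posp ?topple_le0 // topple_id; have := posp_ge0 (eta x); lra.
have := topple_ge _ eta _ yx; have := ler_posp (eta y); have := posp_ge0 (eta y).
by move=> *; apply: posp_le; lra.
Qed.

Lemma sum_mul_topple (S : seq (pt d)) x g eta :
  \sum_(y <- S) g y * topple xi x eta y =
  \sum_(y <- S) g y * eta y +
  posp (eta x) * \sum_(y <- S) g y * (xi ^+ 2 * dlap xi (ddelta R x) y).
Proof. by rewrite /topple mulr_sumr -big_split; apply: eq_bigr => y _ /=; ring. Qed.

Lemma sum_posp_topple (S : seq (pt d)) x eta : uniq S -> neighbours_in S x ->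
  \sum_(y <- S) posp (topple xi x eta y) <= \sum_(y <- S) posp (eta y).
Proof.
move=> uS Sx.
have mass_conserved : \sum_(y <- S) (topple xi x eta y - eta y) = 0.
  under eq_bigr do rewrite /topple addrC addKr -mulrA.
  by rewrite -mulr_sumr sum_dlap_ddelta // mulr0.
rewrite -[leRHS]addr0 -[X in _ <= _ + X]mass_conserved -big_split /=.
by apply: ler_sum => y _; exact: posp_topple.
Qed.

Lemma sum_sqnorm_topple (S : seq (pt d)) x eta : uniq S -> neighbours_in S x ->
  \sum_(y <- S) sqnorm y * topple xi x eta y =
  \sum_(y <- S) sqnorm y * eta y + posp (eta x).
Proof. by move=> uS Sx; rewrite sum_mul_topple sum_sqnorm_dlap_ddelta // mulr1. Qed.

End Toppling.

Section Stabilization.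
Context {R : realType} {d : nat}.
Variables (xi rad : R) (sigma : pt d -> R) (x : nat -> pt d).
Hypotheses (xi_gt0 : 0 < xi) (d_gt0 : (0 < d)%N).
Hypothesis sigma_supp : forall y, sigma y != 0 -> in_ball xi rad y.
Hypothesis x_cover : inf_covering (in_ball xi rad) x.

Local Notation sigma_ := (topseq xi x sigma).
Local Notation u_ := (odometer xi x sigma).

Let xi_neq0 : xi != 0 := lt0r_neq0 xi_gt0.

Let S : seq (pt d) := undup (box (Num.Def.archi_bound (rad / xi)).+1).

Let uS : uniq S := undup_uniq _.

Lemma neighbours_in_box k : (0 < k)%N -> neighbours_in S (x k).
Proof.
move=> k_gt0; have xB := in_ball_box xi_gt0 (proj1 x_cover k k_gt0).
by split=> [|i|i]; rewrite mem_undup; apply: mem_box;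
  [move=> j; exact: leqW | exact: in_box_shift | exact: in_box_shift].
Qed.

Lemma topseqS k : sigma_ k.+1 = topple xi (x k.+1) (sigma_ k).
Proof. by []. Qed.

Lemma odometer0 y : u_ 0 y = 0.
Proof. by rewrite /odometer big_geq // mulr0. Qed.

Lemma odometerS k y :
  u_ k.+1 y = u_ k y + xi ^+ 2 * posp (sigma_ k (x k.+1)) * ddelta R (x k.+1) y.
Proof.
rewrite /odometer big_mkcond [in RHS]big_mkcond big_nat_recr //= /ddelta eq_sym.
by case: eqP => [<-|_]; ring.
Qed.

Lemma odometer_ge0 k y : 0 <= u_ k y.
Proof. by rewrite /odometer mulr_ge0 ?sqr_ge0 // sumr_ge0 // => j _; exact: posp_ge0. Qed.

Lemma odometer_nondecreasing y : nondecreasing_seq (u_ ^~ y).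
Proof.
apply/nondecreasing_seqP => k.
have ddelta_ge0 : 0 <= ddelta R (x k.+1) y by rewrite /ddelta; case: ifP.
by rewrite odometerS lerDl mulr_ge0 // mulr_ge0 ?sqr_ge0 ?posp_ge0.
Qed.

Lemma topseq_odometer k y : sigma_ k y = sigma y + dlap xi (u_ k) y.
Proof.
elim: k y => [|k IH] y.
  by rewrite (_ : u_ 0 = fun=> 0) ?dlap0 ?addr0 //; apply: funext => z; rewrite odometer0.
rewrite topseqS /topple IH (_ : u_ k.+1 = fun z =>
  u_ k z + xi ^+ 2 * posp (sigma_ k (x k.+1)) * ddelta R (x k.+1) z).
  by rewrite dlap_linear; ring.
by apply: funext => z; rewrite odometerS.
Qed.

Definition emitted k := \sum_(1 <= j < k.+1) posp (sigma_ j.-1 (x j)).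

Lemma odometer_le_emitted k y : u_ k y <= xi ^+ 2 * emitted k.
Proof.
rewrite /odometer ler_wpM2l ?sqr_ge0 // big_mkcond ler_sum // => j _.
by case: eqP => [<-|_]; [exact: lexx | exact: posp_ge0].
Qed.

Lemma sum_sqnorm_topseq k :
  \sum_(y <- S) sqnorm y * sigma_ k y = \sum_(y <- S) sqnorm y * sigma y + emitted k.
Proof.
elim: k => [|k IH]; first by rewrite /emitted big_geq // addr0.
rewrite topseqS sum_sqnorm_topple //; last exact: neighbours_in_box.
by rewrite IH /emitted [in RHS]big_nat_recr //= addrA.
Qed.

Lemma sum_posp_topseq k : \sum_(y <- S) posp (sigma_ k y) <= \sum_(y <- S) posp (sigma y).
Proof.
elim: k => [//|k IH]; apply: le_trans IH.
by rewrite topseqS; apply: sum_posp_topple => //; exact: neighbours_in_box.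
Qed.

Lemma emitted_le k : emitted k <=
  (\sum_(y <- S) sqnorm y) * \sum_(y <- S) posp (sigma y) - \sum_(y <- S) sqnorm y * sigma y.
Proof.
rewrite lerBrDr addrC -sum_sqnorm_topseq.
apply: le_trans (sum_mul_le_posp _ _ _ sqnorm_ge0) _.
by rewrite ler_wpM2l ?sumr_ge0 ?sum_posp_topseq // => y _; exact: sqnorm_ge0.
Qed.

Definition odometer_limit y := sup (range (u_ ^~ y)).

Lemma cvg_odometer y : u_ k y @[k --> \oo] --> odometer_limit y.
Proof.
apply: nondecreasing_cvgn; first exact: odometer_nondecreasing.
eexists => _ [k _ <-].
exact: le_trans (odometer_le_emitted k y) (ler_wpM2l (sqr_ge0 xi) (emitted_le k)).
Qed.

Lemma odometer_limit_ge0 y : 0 <= odometer_limit y.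
Proof. by apply: cvgr_to_ge (cvg_odometer y) _; apply: nearW => k; exact: odometer_ge0. Qed.

Definition stable_config y := sigma y + dlap xi odometer_limit y.

Lemma cvg_topseq y : sigma_ k y @[k --> \oo] --> stable_config y.
Proof.
under eq_cvg do rewrite topseq_odometer.
by apply: cvgD; [exact: cvg_cst | exact: cvg_dlap cvg_odometer].
Qed.

Lemma topseq_ge0 y k : 0 <= sigma y -> 0 <= sigma_ k y.
Proof. by move=> y_ge0; elim: k => [//|k IH]; rewrite topseqS topple_ge0. Qed.

Lemma stable_config_ge0 y : 0 <= sigma y -> 0 <= stable_config y.
Proof.
by move=> y_ge0; apply: cvgr_to_ge (cvg_topseq y) _; apply: nearW => k; exact: topseq_ge0.
Qed.

Lemma stable_config_le0 y : in_ball xi rad y -> stable_config y <= 0.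
Proof.
move=> yB; rewrite leNgt; apply/negP => nu_gt0.
have [M _ sigma_gt0] := cvgr_gt _ (cvg_topseq y) _ nu_gt0.
have [[|k] [Mk [k_gt0 xk]]] := proj2 x_cover y yB M; first by [].
have : 0 < sigma_ k.+1 y := sigma_gt0 _ Mk.
by rewrite topseqS -xk ltNge topple_le0.
Qed.

Lemma sigma_eq0_outside y : ~ in_ball xi rad y -> sigma y = 0.
Proof. by move=> yB; have [//|/sigma_supp] := eqVneq (sigma y) 0. Qed.

Lemma topseq_far y k : ~ in_ball xi rad y ->
  ~ (exists y', in_ball xi rad y' /\ adj y y') -> sigma_ k y = 0.
Proof.
move=> yB y_far; elim: k => [|k IH]; first exact: sigma_eq0_outside.
have xB := proj1 x_cover k.+1 isT.
rewrite topseqS topple_far //; first by apply/eqP => yx; apply: yB; rewrite yx.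
by move=> /adj_sym yx; apply: y_far; exists (x k.+1).
Qed.

Lemma stable_config_far y : ~ in_ball xi rad y ->
  ~ (exists y', in_ball xi rad y' /\ adj y y') -> stable_config y = 0.
Proof.
move=> yB y_far; apply/le_anti/andP; split.
  by apply: cvgr_to_le (cvg_topseq y) _; apply: nearW => k; rewrite topseq_far.
by apply: cvgr_to_ge (cvg_topseq y) _; apply: nearW => k; rewrite topseq_far.
Qed.

Lemma stable_config_outside y : y \notin S -> stable_config y = 0.
Proof.
move=> yS; apply: stable_config_far => [yB | [y' [y'B [i yy']]]];
  apply: (negP yS); rewrite mem_undup; apply: mem_box.
  by move=> j; apply: leqW (in_ball_box xi_gt0 yB j).
by case: yy' => ->; apply: in_box_shift (in_ball_box xi_gt0 y'B) _.
Qed.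

Lemma stable_config_gt0 y : 0 < stable_config y -> outer_boundary (in_ball xi rad) y.
Proof.
move=> nu_gt0; have yB : ~ in_ball xi rad y.
  by move=> /stable_config_le0; rewrite leNgt nu_gt0.
split=> //; have [//|y_far] := pselect (exists y', in_ball xi rad y' /\ adj y y').
by move: nu_gt0; rewrite stable_config_far ?ltxx.
Qed.

Lemma stable_config_lt0 y : stable_config y < 0 -> sigma y < 0.
Proof. by rewrite !ltNge; apply: contra; exact: stable_config_ge0. Qed.

Lemma stable_config_boundary_ge0 y :
  outer_boundary (in_ball xi rad) y -> 0 <= stable_config y.
Proof. by case=> yB _; apply: stable_config_ge0; rewrite sigma_eq0_outside. Qed.

Lemma gen_mass_config_stable_config : gen_mass_config stable_config.
Proof.
split; last by exists S => y; exact: stable_config_outside.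
exists (\sum_(z <- S) `|stable_config z|) => y.
have [yS|/stable_config_outside ->] := boolP (y \in S); last by rewrite normr0 sumr_ge0.
by apply: (le_sum_mem S (fun z => `|stable_config z|)).
Qed.

End Stabilization.

Theorem proposition3p1 (R : realType) (d : nat) (xi rad : R)
  (sigma : pt d -> R) (x : nat -> pt d) :
  (2 <= d)%N -> 0 < xi -> 0 < rad ->
  gen_mass_config sigma ->
  (forall y, sigma y != 0 -> in_ball xi rad y) ->
  inf_covering (in_ball xi rad) x ->
  exists (nu : pt d -> R) (u : pt d -> R),
    gen_mass_config nu /\
    (forall y, 0 <= u y) /\
    (forall y, (fun k => topseq xi x sigma k y) @ \oo --> nu y) /\
    (forall y,
       (forall m n : nat, (m <= n)%N ->
          odometer xi x sigma m y <= odometer xi x sigma n y) /\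
       (fun k => odometer xi x sigma k y) @ \oo --> u y) /\
    (forall y, posp (nu y) != 0 -> outer_boundary (in_ball xi rad) y) /\
    (forall y, negp (nu y) != 0 -> negp (sigma y) != 0) /\
    (forall y, outer_boundary (in_ball xi rad) y -> 0 <= nu y) /\
    (forall y, in_ball xi rad y -> nu y <= 0).
Proof.
move=> /ltnW d_gt0 xi_gt0 _ _ sigma_supp x_cover.
exists (stable_config xi sigma x), (odometer_limit xi sigma x).
split; first by apply: (gen_mass_config_stable_config _ rad).
split; first by move=> y; apply: (odometer_limit_ge0 _ rad).
split; first by move=> y; apply: (cvg_topseq _ rad).
split; first by move=> y; split; [exact: odometer_nondecreasing | apply: (cvg_odometer _ rad)].
split; first by move=> y; rewrite posp_eq0 -ltNge; apply: (stable_config_gt0 _ rad).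
split; first by move=> y; rewrite !negp_eq0 -!ltNge; apply: (stable_config_lt0 _ rad).
split; first by move=> y; apply: (stable_config_boundary_ge0 _ rad).
by move=> y; apply: (stable_config_le0 _ rad).
Qed.
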